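(* Let $n_p\ge 1$, let $P\subset\mathbb{R}^{n_p}$ be convex and compact, let $f:\mathbb{R}\times\mathbb{R}^{n_p}\to\mathbb{R}$, let $Q\subset P$ be the (assumed nonempty) set of $\mathbf{p}\in P$ for which $f(z,\mathbf{p})=0$ has at least one solution $z\in\mathbb{R}$, and let $x:Q\to\mathbb{R}$ satisfy $f(x(\mathbf{p}),\mathbf{p})=0$ for all $\mathbf{p}\in Q$. Let $X:=[x^{L},x^{U}]$ be an interval with $x(\mathbf{p})\in X$ for all $\mathbf{p}\in Q$. Suppose $f^{cv}$ and $f^{cc}$ are convex and concave relaxations of $f$ on $X\times P$ which are piecewise affine of the form $$f^{cv}(\xi,\mathbf{p})=\max\{[\mathbf{a}^{cv,i}]^\top\mathbf{p}+\alpha^{cv,i}\xi+b^{cv,i}: i\in\{1,\dots,k\}\},\qquad f^{cc}(\xi,\mathbf{p})=\min\{[\mathbf{a}^{cc,j}]^\top\mathbf{p}+\alpha^{cc,j}\xi+b^{cc,j}: j\in\{1,\dots,\ell\}\},$$ with $\mathbf{a}^{cv,i},\mathbf{a}^{cc,j}\in\mathbb{R}^{n_p}$ and $\alpha^{cv,i},b^{cv,i},\alpha^{cc,j},b^{cc,j}\in\mathbb{R}$. Let $K^-=\{i:\alpha^{cv,i}<0\}$, $K^+=\{i:\alpha^{cv,i}>0\}$, $L^-=\{j:\alpha^{cc,j}<0\}$, $L^+=\{j:\alpha^{cc,j}>0\}$, and for each $i,j$ define $g_i(\mathbf{p}):=\frac{-1}{\alpha^{cv,i}}([\mathbf{a}^{cv,i}]^\top\mathbf{p}+b^{cv,i})$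 and $\gamma_j(\mathbf{p}):=\frac{-1}{\alpha^{cc,j}}([\mathbf{a}^{cc,j}]^\top\mathbf{p}+b^{cc,j})$ (for the indices where the denominators are nonzero). Define $h^{cv},h^{cc}:P\to\mathbb{R}$ by $$h^{cv}(\mathbf{p}):=\max\big(\{g_i(\mathbf{p}):i\in K^-\}\cup\{\gamma_j(\mathbf{p}):j\in L^+\}\big),\qquad h^{cc}(\mathbf{p}):=\min\big(\{g_i(\mathbf{p}):i\in K^+\}\cup\{\gamma_j(\mathbf{p}):j\in L^-\}\big),$$ and define $x^{cv}(\mathbf{p}):=\max\{x^{L},h^{cv}(\mathbf{p})\}$ and $x^{cc}(\mathbf{p}):=\min\{x^{U},h^{cc}(\mathbf{p})\}$. Then for any $\mathbf{p}\in\mathrm{int}(Q)$, a subgradient $\mathbf{s}^{cv}\in\mathbb{R}^{n_p}$ of $x^{cv}$ at $\mathbf{p}$ is given by: $\mathbf{s}^{cv}:=\mathbf{0}$ if $x^{cv}(\mathbf{p})=x^{L}$; otherwise, if $x^{cv}(\mathbf{p})=g_i(\mathbf{p})$ for some $i\in K^-$, then $\mathbf{s}^{cv}:=-\mathbf{a}^{cv,i}/\alpha^{cv,i}$; otherwise there exists $j\in L^+$ with $x^{cv}(\mathbf{p})=\gamma_j(\mathbf{p})$, and $\mathbf{s}^{cv}:=-\mathbf{a}^{cc,j}/\alpha^{cc,j}$. Similarly, a subgradient $\mathbf{s}^{cc}\in\mathbb{R}^{n_p}$ of the concave function $x^{cc}$ at $\mathbf{p}$ is given by: $\mathbf{s}^{cc}:=\mathbf{0}$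 if $x^{cc}(\mathbf{p})=x^{U}$; otherwise, if $x^{cc}(\mathbf{p})=\gamma_j(\mathbf{p})$ for some $j\in L^-$, then $\mathbf{s}^{cc}:=-\mathbf{a}^{cc,j}/\alpha^{cc,j}$; otherwise there exists $i\in K^+$ with $x^{cc}(\mathbf{p})=g_i(\mathbf{p})$, and $\mathbf{s}^{cc}:=-\mathbf{a}^{cv,i}/\alpha^{cv,i}$.
   Context: A convex relaxation of $f$ on $X\times P$ is a convex function $f^{cv}$ on $X\times P$ with $f^{cv}\le f$ there; a concave relaxation is a concave $f^{cc}$ with $f^{cc}\ge f$. The functions $x^{cv}$, $x^{cc}$ are (closed-form expressions of) the implicit function relaxations $x^{cv}(\mathbf{p})=\inf\{\xi\in X: f^{cv}(\xi,\mathbf{p})\le 0\le f^{cc}(\xi,\mathbf{p})\}$ and $x^{cc}(\mathbf{p})=\sup\{\xi\in X: f^{cv}(\xi,\mathbf{p})\le 0\le f^{cc}(\xi,\mathbf{p})\}$. A subgradient of a convex function $\phi$ at $\mathbf{p}$ is $\mathbf{s}$ with $\phi(\boldsymbol{\eta})\ge\phi(\mathbf{p})+\langle\mathbf{s},\boldsymbol{\eta}-\mathbf{p}\rangle$ for all $\boldsymbol{\eta}$ in the domain; for a concave $\phi$ it is $\mathbf{s}$ with $\phi(\boldsymbol{\eta})\le\phi(\mathbf{p})+\langle\mathbf{s},\boldsymbol{\eta}-\mathbf{p}\rangle$. *)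

From HB Require Import structures.
From mathcomp Require Import all_boot all_order all_algebra.
From mathcomp Require Import all_classical all_reals all_analysis.
Set Implicit Arguments. Unset Strict Implicit. Unset Printing Implicit Defensive.
Import Order.TTheory GRing.Theory Num.Theory.
Import numFieldNormedType.Exports.
Local Open Scope classical_set_scope.
Local Open Scope ring_scope.

Definition dotv {R : realType} {n : nat} (a p : 'rV[R]_n) : R :=
  \sum_(i < n) a ord0 i * p ord0 i.

Definition convex_setv {R : realType} {n : nat} (A : set 'rV[R]_n) : Prop :=
  forall x y (t : R), A x -> A y -> 0 <= t -> t <= 1 -> A (t *: x + (1 - t) *: y).

Definition convex_on2 {R : realType} {n : nat} (X : set R) (P : set 'rV[R]_n)
  (F : R -> 'rV[R]_n -> R) : Prop :=
  forall z1 z2 p1 p2 (t : R), X z1 -> X z2 -> P p1 -> P p2 -> 0 <= t -> t <= 1 ->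
    F (t * z1 + (1 - t) * z2) (t *: p1 + (1 - t) *: p2)
      <= t * F z1 p1 + (1 - t) * F z2 p2.

Definition concave_on2 {R : realType} {n : nat} (X : set R) (P : set 'rV[R]_n)
  (F : R -> 'rV[R]_n -> R) : Prop :=
  convex_on2 X P (fun z p => - F z p).

Definition subgrad_cv {R : realType} {n : nat} (D : set 'rV[R]_n)
  (phi : 'rV[R]_n -> R) (p s : 'rV[R]_n) : Prop :=
  forall eta, D eta -> phi p + dotv s (eta - p) <= phi eta.

Definition subgrad_cc {R : realType} {n : nat} (D : set 'rV[R]_n)
  (phi : 'rV[R]_n -> R) (p s : 'rV[R]_n) : Prop :=
  forall eta, D eta -> phi eta <= phi p + dotv s (eta - p).

Definition affp {R : realType} {n : nat} (a : 'rV[R]_n) (alpha b xi : R) (p : 'rV[R]_n) : R :=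
  dotv a p + alpha * xi + b.

Definition pw_max {R : realType} {n k : nat} (a : 'I_k.+1 -> 'rV[R]_n)
  (alpha b : 'I_k.+1 -> R) (xi : R) (p : 'rV[R]_n) : R :=
  \big[Num.max/affp (a ord0) (alpha ord0) (b ord0) xi p]_(i < k.+1)
     affp (a i) (alpha i) (b i) xi p.

Definition pw_min {R : realType} {n k : nat} (a : 'I_k.+1 -> 'rV[R]_n)
  (alpha b : 'I_k.+1 -> R) (xi : R) (p : 'rV[R]_n) : R :=
  \big[Num.min/affp (a ord0) (alpha ord0) (b ord0) xi p]_(i < k.+1)
     affp (a i) (alpha i) (b i) xi p.

(* g(p) = -1/alpha * (a^T p + b) : the zero in xi of the affine piece. *)
Definition zero_piece {R : realType} {n : nat} (a : 'rV[R]_n) (alpha b : R)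
  (p : 'rV[R]_n) : R :=
  - alpha^-1 * (dotv a p + b).

(* x^cv(p) = max{ xL, h^cv(p) } with
   h^cv(p) = max ({g_i(p) : alpha^cv_i < 0} U {gamma_j(p) : alpha^cc_j > 0})
   (convention: the max of an empty family is -oo, so x^cv = xL then). *)
Definition xcv_fun {R : realType} {n k l : nat}
  (acv : 'I_k.+1 -> 'rV[R]_n) (alcv bcv : 'I_k.+1 -> R)
  (acc : 'I_l.+1 -> 'rV[R]_n) (alcc bcc : 'I_l.+1 -> R) (xL : R)
  (p : 'rV[R]_n) : R :=
  Num.max (\big[Num.max/xL]_(i < k.+1 | alcv i < 0) zero_piece (acv i) (alcv i) (bcv i) p)
          (\big[Num.max/xL]_(j < l.+1 | 0 < alcc j) zero_piece (acc j) (alcc j) (bcc j) p).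

(* x^cc(p) = min{ xU, h^cc(p) } with
   h^cc(p) = min ({g_i(p) : alpha^cv_i > 0} U {gamma_j(p) : alpha^cc_j < 0})
   (convention: the min of an empty family is +oo). *)
Definition xcc_fun {R : realType} {n k l : nat}
  (acv : 'I_k.+1 -> 'rV[R]_n) (alcv bcv : 'I_k.+1 -> R)
  (acc : 'I_l.+1 -> 'rV[R]_n) (alcc bcc : 'I_l.+1 -> R) (xU : R)
  (p : 'rV[R]_n) : R :=
  Num.min (\big[Num.min/xU]_(i < k.+1 | 0 < alcv i) zero_piece (acv i) (alcv i) (bcv i) p)
          (\big[Num.min/xU]_(j < l.+1 | alcc j < 0) zero_piece (acc j) (alcc j) (bcc j) p).

From HB Require Import structures.
From mathcomp Require Import all_boot all_order all_algebra.
From mathcomp Require Import all_classical all_reals all_analysis.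
From mathcomp Require Import ring.
Set Implicit Arguments. Unset Strict Implicit. Unset Printing Implicit Defensive.
Import Order.TTheory GRing.Theory Num.Theory.
Import numFieldNormedType.Exports.
Local Open Scope classical_set_scope.
Local Open Scope ring_scope.

(* As a function of p alone, x^cv is the pointwise maximum of the constant x^L
   and of the affine functions g_i (i in K^-) and gamma_j (j in L^+); the value
   x^cv(p) is attained by one of them, and the gradient of an affine minorant
   that touches x^cv at p is a subgradient there.  Dually for x^cc. *)

Lemma big_selective {T I : Type} {op : T -> T -> T}
    (op_sel : forall a b, op a b = a \/ op a b = b)
    (x : T) (r : seq I) (P : pred I) (F : I -> T) :
  \big[op/x]_(i <- r | P i) F i = x \/
  exists2 i, P i & \big[op/x]_(i <- r | P i) F i = F i.
Proof.
apply: (big_ind (fun y => y = x \/ exists2 i, P i & y = F i)); first by left.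
- by move=> a b Ha Hb; case: (op_sel a b) => ->.
- by move=> i Pi; right; exists i.
Qed.

Lemma max_selective {d} {T : orderType d} (a b : T) :
  Order.max a b = a \/ Order.max a b = b.
Proof. by case: leP; [right | left]. Qed.

Lemma min_selective {d} {T : orderType d} (a b : T) :
  Order.min a b = a \/ Order.min a b = b.
Proof. by case: leP; [left | right]. Qed.

Lemma dotv0l (R : realType) (n : nat) (v : 'rV[R]_n) : dotv 0 v = 0.
Proof. by rewrite /dotv big1 // => i _; rewrite mxE mul0r. Qed.

Lemma zero_piece_affine (R : realType) (n : nat) (a : 'rV[R]_n) (al b : R)
    (p eta : 'rV[R]_n) :
  zero_piece a al b eta = zero_piece a al b p + dotv (- (al^-1 *: a)) (eta - p).
Proof.
rewrite /zero_piece /dotv.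
have -> : \sum_(i < n) (- (al^-1 *: a)) ord0 i * (eta - p) ord0 i =
    - al^-1 * (\sum_(i < n) a ord0 i * eta ord0 i - \sum_(i < n) a ord0 i * p ord0 i).
  by rewrite -sumrB mulr_sumr; apply: eq_bigr => i _; rewrite !mxE; ring.
ring.
Qed.

Section ActiveAffinePiece.
Variables (R : realType) (n : nat) (D : set 'rV[R]_n).
Variables (phi psi : 'rV[R]_n -> R) (p s : 'rV[R]_n).
Hypothesis psi_affine : forall eta, psi eta = psi p + dotv s (eta - p).
Hypothesis psi_active : phi p = psi p.

Lemma subgrad_cv_active_minorant :
  (forall eta, D eta -> psi eta <= phi eta) -> subgrad_cv D phi p s.
Proof. by move=> psi_le eta Deta; rewrite psi_active -psi_affine psi_le. Qed.

Lemma subgrad_cc_active_majorant :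
  (forall eta, D eta -> phi eta <= psi eta) -> subgrad_cc D phi p s.
Proof. by move=> psi_ge eta Deta; rewrite psi_active -psi_affine psi_ge. Qed.

End ActiveAffinePiece.

Section ImplicitRelaxations.
Variables (R : realType) (n k l : nat) (D : set 'rV[R]_n).
Variables (acv : 'I_k.+1 -> 'rV[R]_n) (alcv bcv : 'I_k.+1 -> R).
Variables (acc : 'I_l.+1 -> 'rV[R]_n) (alcc bcc : 'I_l.+1 -> R).

Local Notation g i := (zero_piece (acv i) (alcv i) (bcv i)).
Local Notation gam j := (zero_piece (acc j) (alcc j) (bcc j)).
Local Notation xcv xL := (xcv_fun acv alcv bcv acc alcc bcc xL).
Local Notation xcc xU := (xcc_fun acv alcv bcv acc alcc bcc xU).

Lemma xcv_cases xL p :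
  [\/ xcv xL p = xL, exists2 i, alcv i < 0 & xcv xL p = g i p
    | exists2 j, 0 < alcc j & xcv xL p = gam j p].
Proof.
rewrite /xcv_fun; set A := (X in Num.max X _); set B := (X in Num.max _ X).
case: (max_selective A B) => ->.
- have [|[i]] : A = xL \/ exists2 i, alcv i < 0 & A = g i p :=
    big_selective max_selective _ _ _ _.
  + by constructor 1.
  + by constructor 2; exists i.
- have [|[j]] : B = xL \/ exists2 j, 0 < alcc j & B = gam j p :=
    big_selective max_selective _ _ _ _.
  + by constructor 1.
  + by constructor 3; exists j.
Qed.

Lemma xcc_cases xU p :
  [\/ xcc xU p = xU, exists2 i, 0 < alcv i & xcc xU p = g i p
    | exists2 j, alcc j < 0 & xcc xU p = gam j p].
Proof.
rewrite /xcc_fun; set A := (X in Num.min X _); set B := (X in Num.min _ X).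
case: (min_selective A B) => ->.
- have [|[i]] : A = xU \/ exists2 i, 0 < alcv i & A = g i p :=
    big_selective min_selective _ _ _ _.
  + by constructor 1.
  + by constructor 2; exists i.
- have [|[j]] : B = xU \/ exists2 j, alcc j < 0 & B = gam j p :=
    big_selective min_selective _ _ _ _.
  + by constructor 1.
  + by constructor 3; exists j.
Qed.

Lemma subgrad_xcv_lb xL p : xcv xL p = xL -> subgrad_cv D (xcv xL) p 0.
Proof.
move=> active; apply: (@subgrad_cv_active_minorant _ _ _ _ (fun=> xL)) => //.
- by move=> eta; rewrite dotv0l addr0.
- by move=> eta _; rewrite le_max bigmax_ge_id.
Qed.

Lemma subgrad_xcv_g xL p i : alcv i < 0 -> xcv xL p = g i p ->
  subgrad_cv D (xcv xL) p (- ((alcv i)^-1 *: acv i)).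
Proof.
move=> neg active.
apply: (subgrad_cv_active_minorant (zero_piece_affine (acv i) _ (bcv i) p)) => //.
by move=> eta _; rewrite le_max le_bigmax_cond.
Qed.

Lemma subgrad_xcv_gam xL p j : 0 < alcc j -> xcv xL p = gam j p ->
  subgrad_cv D (xcv xL) p (- ((alcc j)^-1 *: acc j)).
Proof.
move=> pos active.
apply: (subgrad_cv_active_minorant (zero_piece_affine (acc j) _ (bcc j) p)) => //.
by move=> eta _; rewrite le_max le_bigmax_cond ?orbT.
Qed.

Lemma subgrad_xcc_ub xU p : xcc xU p = xU -> subgrad_cc D (xcc xU) p 0.
Proof.
move=> active; apply: (@subgrad_cc_active_majorant _ _ _ _ (fun=> xU)) => //.
- by move=> eta; rewrite dotv0l addr0.
- by move=> eta _; rewrite ge_min bigmin_le_id.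
Qed.

Lemma subgrad_xcc_g xU p i : 0 < alcv i -> xcc xU p = g i p ->
  subgrad_cc D (xcc xU) p (- ((alcv i)^-1 *: acv i)).
Proof.
move=> pos active.
apply: (subgrad_cc_active_majorant (zero_piece_affine (acv i) _ (bcv i) p)) => //.
by move=> eta _; rewrite ge_min bigmin_le_cond.
Qed.

Lemma subgrad_xcc_gam xU p j : alcc j < 0 -> xcc xU p = gam j p ->
  subgrad_cc D (xcc xU) p (- ((alcc j)^-1 *: acc j)).
Proof.
move=> neg active.
apply: (subgrad_cc_active_majorant (zero_piece_affine (acc j) _ (bcc j) p)) => //.
by move=> eta _; rewrite ge_min bigmin_le_cond ?orbT.
Qed.

End ImplicitRelaxations.

Theorem proposition4p1 (R : realType) (np : nat) (P : set 'rV[R]_np)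
  (f : R -> 'rV[R]_np -> R) (x : 'rV[R]_np -> R) (xL xU : R)
  (k l : nat)
  (acv : 'I_k.+1 -> 'rV[R]_np) (alcv bcv : 'I_k.+1 -> R)
  (acc : 'I_l.+1 -> 'rV[R]_np) (alcc bcc : 'I_l.+1 -> R) :
  (1 <= np)%N ->
  convex_setv P -> compact P ->
  let Q := [set p | P p /\ exists z : R, f z p = 0] in
  Q !=set0 ->
  (forall p, Q p -> f (x p) p = 0) ->
  xL <= xU ->
  let X := [set z : R | xL <= z <= xU] in
  (forall p, Q p -> X (x p)) ->
  let fcv := pw_max acv alcv bcv in
  let fcc := pw_min acc alcc bcc in
  convex_on2 X P fcv -> (forall z p, X z -> P p -> fcv z p <= f z p) ->
  concave_on2 X P fcc -> (forall z p, X z -> P p -> f z p <= fcc z p) ->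
  let g i := zero_piece (acv i) (alcv i) (bcv i) in
  let gam j := zero_piece (acc j) (alcc j) (bcc j) in
  let xcv := xcv_fun acv alcv bcv acc alcc bcc xL in
  let xcc := xcc_fun acv alcv bcv acc alcc bcc xU in
  forall p, interior Q p ->
  (* subgradient of x^cv at p *)
  [/\ xcv p = xL -> subgrad_cv P xcv p 0,
      xcv p <> xL -> forall i, alcv i < 0 -> xcv p = g i p ->
        subgrad_cv P xcv p (- ((alcv i)^-1 *: acv i)) &
      xcv p <> xL -> (forall i, alcv i < 0 -> xcv p <> g i p) ->
        (exists j, 0 < alcc j /\ xcv p = gam j p) /\
        (forall j, 0 < alcc j -> xcv p = gam j p ->
           subgrad_cv P xcv p (- ((alcc j)^-1 *: acc j)))] /\
  (* subgradient of x^cc at p *)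
  [/\ xcc p = xU -> subgrad_cc P xcc p 0,
      xcc p <> xU -> forall j, alcc j < 0 -> xcc p = gam j p ->
        subgrad_cc P xcc p (- ((alcc j)^-1 *: acc j)) &
      xcc p <> xU -> (forall j, alcc j < 0 -> xcc p <> gam j p) ->
        (exists i, 0 < alcv i /\ xcc p = g i p) /\
        (forall i, 0 < alcv i -> xcc p = g i p ->
           subgrad_cc P xcc p (- ((alcv i)^-1 *: acv i)))].
Proof.
move=> _ _ _ Q _ _ _ X _ fcv fcc _ _ _ _ g gam xcv xcc p _.
split; split.
- exact: subgrad_xcv_lb.
- by move=> _ i; apply: subgrad_xcv_g.
- move=> not_lb not_g; split; last by move=> j; apply: subgrad_xcv_gam.
  case: (xcv_cases acv alcv bcv acc alcc bcc xL p) => [//|[i neg]|[j pos E]].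
  + by move/(not_g i neg).
  + by exists j.
- exact: subgrad_xcc_ub.
- by move=> _ j; apply: subgrad_xcc_gam.
- move=> not_ub not_gam; split; last by move=> i; apply: subgrad_xcc_g.
  case: (xcc_cases acv alcv bcv acc alcc bcc xU p) => [//|[i pos E]|[j neg]].
  + by exists i.
  + by move/(not_gam j neg).
Qed.
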